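(* The adjunction $i_\ell:\mathbf{Gr}\rightleftarrows\mathbf{Gr}_\ell:(-)^\circ$, with both categories carrying their Matsushita model structures, is a Quillen equivalence.
   Context: A simplicial complex consists of a vertex set and a collection of nonempty finite subsets (simplices) containing all singletons and closed under nonempty subsets; maps are vertex functions preserving simplices; $\mathbf{Cpx}$ is the category. $\mathbf{Gr}$ (reflexive graphs) is the full subcategory of complexes whose simplices have at most two elements; $\mathrm{C}\ell:\mathbf{Gr}\to\mathbf{Cpx}$ is the clique complex functor. $\mathbf{\Delta}^n$ is the complex on $\{0,\dots,n\}$ with all nonempty subsets simplices, $\mathrm{Sing}(K)_n=\mathbf{Cpx}(\mathbf{\Delta}^n,K)$, $\mathrm{Ex}$ is the right adjoint of barycentric subdivision. Matsushita model structure on $\mathbf{Gr}$: $f$ is a weak equivalence iff $\mathrm{Sing}\,\mathrm{C}\ell(f)$ is a weak homotopy equivalence, a fibration iff $\mathrm{Ex}^2\mathrm{Sing}\,\mathrm{C}\ell(f)$ is a Kan fibration, cofibrations by left lifting against trivial fibrations. A loop graph is a set with a symmetric relation (looped vertices are those related to themselves); maps preserve the relation; $\mathbf{Gr}_\ell$ is the category. $i_\ell$ regards a reflexive graph as a loop graph with all vertices looped; its right adjoint $(-)^\circ$ takes the maximal reflexive subgraph (induced on looped vertices). Matsushita model structure on $\mathbf{Gr}_\ell$: $f$ is a weak equivalence (fibration) iff $f^\circ$ is one in the Matsushita model structure on $\mathbf{Gr}$; cofibrations by left lifting against trivial fibrations. *)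

From Stdlib Require Import FunctionalExtensionality ProofIrrelevance Relations.
From mathcomp Require Import all_boot.

Set Implicit Arguments.
Unset Strict Implicit.
Unset Printing Implicit Defensive.

Lemma sigP_eq (A : Type) (P : A -> Prop) (x y : {a | P a}) :
  proj1_sig x = proj1_sig y -> x = y.
Proof.
case: x y => [a pa] [b pb] /= E; subst b; f_equal; apply: proof_irrelevance.
Qed.

(* The simplex category: monotone maps [m] -> [n], [n] = {0,..,n}     *)

Record mono (m n : nat) := Mono {
  mfun :> 'I_m.+1 -> 'I_n.+1;
  mmono : forall i j : 'I_m.+1, i <= j -> mfun i <= mfun j }.

Lemma mono_eq m n (f g : mono m n) : (forall i, f i = g i) -> f = g.
Proof.
case: f g => f fp [g gp] /= H.
have E : f = g by apply: functional_extensionality.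
subst g; f_equal; apply: proof_irrelevance.
Qed.

Definition mono_id n : mono n n := @Mono n n (fun i => i) (fun i j h => h).

Definition mono_comp l m n (t : mono m n) (p : mono l m) : mono l n :=
  @Mono l n (fun i => t (p i)) (fun i j h => mmono t (mmono p h)).

Definition const_mono m n (j : 'I_n.+1) : mono m n :=
  @Mono m n (fun _ => j) (fun _ _ _ => leqnn j).

Record sSet := SSet {
  sX :> nat -> Type;
  sact : forall m n, mono m n -> sX n -> sX m;
  sact_id : forall n (x : sX n), sact (mono_id n) x = x;
  sact_comp : forall l m n (t : mono m n) (p : mono l m) (x : sX n),
      sact (mono_comp t p) x = sact p (sact t x) }.

Arguments sact {s m n} t x.

Record shom (X Y : sSet) := SHom {
  shmap : forall n, X n -> Y n;
  shnat : forall m n (t : mono m n) (x : X n),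
      @shmap m (sact t x) = sact t (@shmap n x) }.

Arguments shmap {X Y} s n x.
Coercion shmap : shom >-> Funclass.

Lemma shom_eq X Y (f g : shom X Y) : (forall n x, f n x = g n x) -> f = g.
Proof.
case: f g => f fp [g gp] /= H.
have E : f = g.
  apply: functional_extensionality_dep => n.
  by apply: functional_extensionality => x; apply: H.
subst g; f_equal; apply: proof_irrelevance.
Qed.

Definition shcomp X Y Z (g : shom Y Z) (f : shom X Y) : shom X Z.
Proof.
refine (@SHom X Z (fun n x => g n (f n x)) _).
by move=> m n t x; rewrite !shnat.
Defined.

Definition Delta_s (n : nat) : sSet.
Proof.
refine (@SSet (fun m => mono m n) (fun m k t x => mono_comp x t) _ _).
- by move=> k x; apply: mono_eq.
- by move=> l m k t p x; apply: mono_eq.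
Defined.

Definition horn_pred n (k : 'I_n.+1) m (p : mono m n) : Prop :=
  exists j : 'I_n.+1, j != k /\ forall i, p i != j.

Lemma horn_pred_comp n (k : 'I_n.+1) m l (t : mono l m) (p : mono m n) :
  horn_pred k p -> horn_pred k (mono_comp p t).
Proof. case=> j [jk hj]; exists j; split => // i; exact: hj. Qed.

Definition Horn n (k : 'I_n.+1) : sSet.
Proof.
refine (@SSet (fun m => {p : mono m n | horn_pred k p})
  (fun m l t x => exist _ (mono_comp (proj1_sig x) t)
                     (horn_pred_comp t (proj2_sig x))) _ _).
- by move=> l x; apply: sigP_eq; apply: mono_eq.
- by move=> l m' k' t p x; apply: sigP_eq; apply: mono_eq.
Defined.

Definition horn_incl n (k : 'I_n.+1) : shom (Horn k) (Delta_s n).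
Proof. by refine (@SHom (Horn k) (Delta_s n) (fun m x => proj1_sig x) _). Defined.

Definition cyl (X : sSet) : sSet.
Proof.
refine (@SSet (fun m => (X m * mono m 1)%type)
  (fun m n t x => (sact t x.1, mono_comp x.2 t)) _ _).
- move=> n [x p] /=; rewrite sact_id; congr pair; exact: mono_eq.
- move=> l m n t p [x q] /=; rewrite sact_comp; congr pair; exact: mono_eq.
Defined.

Definition cyl_in (X : sSet) (e : 'I_2) : shom X (cyl X).
Proof.
refine (@SHom X (cyl X) (fun m x => (x, const_mono m e)) _).
by move=> m n t x /=; congr pair; apply: mono_eq.
Defined.

Definition homotopic X K (f g : shom X K) : Prop :=
  exists H : shom (cyl X) K,
    (forall n x, H n (cyl_in X ord0 n x) = f n x) /\
    (forall n x, H n (cyl_in X ord_max n x) = g n x).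

Definition hrel X K : relation (shom X K) :=
  clos_refl_sym_trans (shom X K) (@homotopic X K).

Definition pt_s : sSet.
Proof. by refine (@SSet (fun _ => unit) (fun _ _ _ x => x) _ _). Defined.

Definition to_pt (X : sSet) : shom X pt_s.
Proof. by refine (@SHom X pt_s (fun _ _ => tt) _). Defined.

(* Kan fibrations: right lifting property against all horn inclusions
   Lambda^n_k -> Delta[n], n >= 1, 0 <= k <= n *)
Definition kan_fib X Y (p : shom X Y) : Prop :=
  forall n (k : 'I_n.+2) (h : shom (Horn k) X) (s : shom (Delta_s n.+1) Y),
    (forall m (x : Horn k m), p m (h m x) = s m (horn_incl k m x)) ->
    exists l : shom (Delta_s n.+1) X,
      (forall m (x : Horn k m), l m (horn_incl k m x) = h m x) /\
      (forall m (y : Delta_s n.+1 m), p m (l m y) = s m y).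

Definition kan_complex (K : sSet) : Prop := kan_fib (to_pt K).

(* weak homotopy equivalences: f : X -> Y induces a bijection
   [Y, K] -> [X, K] on homotopy classes for every Kan complex K *)
Definition weq X Y (f : shom X Y) : Prop :=
  forall K : sSet, kan_complex K ->
    (forall a : shom X K, exists b : shom Y K, hrel a (shcomp b f)) /\
    (forall b b' : shom Y K, hrel (shcomp b f) (shcomp b' f) -> hrel b b').

(* Ex : right adjoint of barycentric subdivision                      *)

(* sd Delta[n] = nerve of the poset of nonempty subsets of [n] *)
Definition chainP n k (c : 'I_k.+1 -> {set 'I_n.+1}) : Prop :=
  (forall i, c i != set0) /\ (forall i j : 'I_k.+1, i <= j -> c i \subset c j).

Lemma chainP_comp n k m (t : mono m k) (c : 'I_k.+1 -> {set 'I_n.+1}) :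
  chainP c -> chainP (fun i => c (t i)).
Proof.
case=> c0 cm; split => [i|i j hij]; first exact: c0.
by apply: cm; apply: mmono.
Qed.

Lemma chainP_img n m k (t : mono m n) (c : 'I_k.+1 -> {set 'I_m.+1}) :
  chainP c -> chainP (fun i => [set t y | y in c i]).
Proof.
case=> c0 cm; split => [i|i j hij].
  by rewrite imset_eq0; apply: c0.
by apply: imsetS; apply: cm.
Qed.

Definition sdDelta (n : nat) : sSet.
Proof.
refine (@SSet (fun k => {c : 'I_k.+1 -> {set 'I_n.+1} | chainP c})
  (fun m k t x => exist _ (fun i => proj1_sig x (t i))
                     (chainP_comp t (proj2_sig x))) _ _).
- by move=> k x; apply: sigP_eq.
- by move=> l m k t p x; apply: sigP_eq.
Defined.

Definition sd_map m n (t : mono m n) : shom (sdDelta m) (sdDelta n).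
Proof.
refine (@SHom (sdDelta m) (sdDelta n)
  (fun k x => exist _ (fun i => [set t y | y in proj1_sig x i])
                 (chainP_img t (proj2_sig x))) _).
by move=> k l u x; apply: sigP_eq.
Defined.

Definition Ex (X : sSet) : sSet.
Proof.
refine (@SSet (fun n => shom (sdDelta n) X)
  (fun m n t g => shcomp g (sd_map t)) _ _).
- move=> n g; apply: shom_eq => k x /=; congr (g k _).
  apply: sigP_eq => /=; apply: functional_extensionality => i.
  by apply/setP => y; apply/imsetP/idP => [[z hz ->] //|hy]; exists y.
- move=> l m n t p g; apply: shom_eq => k x /=; congr (g k _).
  apply: sigP_eq => /=; apply: functional_extensionality => i.
  by rewrite -imset_comp.
Defined.

Definition Ex_map X Y (f : shom X Y) : shom (Ex X) (Ex Y).
Proof.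
refine (@SHom (Ex X) (Ex Y) (fun n g => shcomp f g) _).
by move=> m n t g; apply: shom_eq.
Defined.

Definition finite_nonempty (V : Type) (S : V -> Prop) : Prop :=
  (exists x, S x) /\ exists k (e : 'I_k -> V), forall x, S x -> exists i, e i = x.

Record cpx := Cpx {
  cV :> Type;
  simplex : (cV -> Prop) -> Prop;
  simplex_fin : forall S, simplex S -> finite_nonempty S;
  simplex_single : forall v, simplex (fun x => x = v);
  simplex_sub : forall S T, simplex S -> (exists x, T x) ->
                  (forall x, T x -> S x) -> simplex T }.

Definition image (A B : Type) (f : A -> B) (S : A -> Prop) : B -> Prop :=
  fun y => exists x, S x /\ f x = y.

Record chom (K L : cpx) := CHom {
  chmap :> K -> L;
  chmap_simplex : forall S, simplex S -> simplex (image chmap S) }.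

Lemma chom_eq K L (f g : chom K L) : (forall x, f x = g x) -> f = g.
Proof.
case: f g => f fp [g gp] /= H.
have E : f = g by apply: functional_extensionality.
subst g; f_equal; apply: proof_irrelevance.
Qed.

Definition chcomp K L M (g : chom L M) (f : chom K L) : chom K M.
Proof.
refine (@CHom K M (fun x => g (f x)) _).
move=> S hS; apply: (simplex_sub (chmap_simplex g (chmap_simplex f hS))).
- case: (simplex_fin hS) => [[x hx] _]; by exists (g (f x)), x.
- move=> y [x [hx <-]]; exists (f x); split => //; by exists x.
Defined.

Definition Delta_c (n : nat) : cpx.
Proof.
refine (@Cpx 'I_n.+1 (fun S => exists x, S x) _ _ _).
- move=> S hS; split => //; exists n.+1, id => x _; by exists x.
- by move=> v; exists v.
- by [].
Defined.

Definition Delta_cmap m n (t : mono m n) : chom (Delta_c m) (Delta_c n).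
Proof.
refine (@CHom (Delta_c m) (Delta_c n) t _).
move=> S [x hx]; by exists (t x), x.
Defined.

Definition Sing (K : cpx) : sSet.
Proof.
refine (@SSet (fun n => chom (Delta_c n) K)
  (fun m n t f => chcomp f (Delta_cmap t)) _ _).
- by move=> n f; apply: chom_eq.
- by move=> l m n t p f; apply: chom_eq.
Defined.

Definition Sing_map K L (f : chom K L) : shom (Sing K) (Sing L).
Proof.
refine (@SHom (Sing K) (Sing L) (fun n g => chcomp f g) _).
by move=> m n t g; apply: chom_eq.
Defined.

(* a reflexive graph = a complex whose simplices have at most two
   elements, i.e. a reflexive symmetric relation *)
Record graph := Graph {
  gV :> Type;
  gadj : gV -> gV -> Prop;
  gadj_sym : forall x y, gadj x y -> gadj y x;
  gadj_refl : forall x, gadj x x }.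

Record ghom (G H : graph) := GHom {
  gmap :> G -> H;
  gmap_adj : forall x y, gadj x y -> gadj (gmap x) (gmap y) }.

Definition Cl (G : graph) : cpx.
Proof.
refine (@Cpx G (fun S => finite_nonempty S /\
                          forall x y, S x -> S y -> gadj x y) _ _ _).
- by move=> S [].
- move=> v; split; last by move=> x y -> ->; apply: gadj_refl.
  split; first by exists v.
  by exists 1, (fun _ => v) => x ->; exists ord0.
- move=> S T [[_ [k [e he]]] hS] hT hTS; split.
    split => //; exists k, e => x hx; exact: he (hTS _ hx).
  by move=> x y hx hy; apply: hS; apply: hTS.
Defined.

Definition Cl_map G H (f : ghom G H) : chom (Cl G) (Cl H).
Proof.
refine (@CHom (Cl G) (Cl H) f _).
move=> S [[[x hx] [k [e he]]] hS]; split.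
  split; first by exists (f x), x.
  exists k, (fun i => f (e i)) => y [z [hz <-]].
  by case: (he z hz) => i <-; exists i.
by move=> y y' [z [hz <-]] [z' [hz' <-]]; apply: gmap_adj; apply: hS.
Defined.

Definition Gr_weq G H (f : ghom G H) : Prop := weq (Sing_map (Cl_map f)).

Definition Gr_fib G H (f : ghom G H) : Prop :=
  kan_fib (Ex_map (Ex_map (Sing_map (Cl_map f)))).

Definition Gr_llp A B X Y (i : ghom A B) (p : ghom X Y) : Prop :=
  forall (a : ghom A X) (b : ghom B Y),
    (forall x, p (a x) = b (i x)) ->
    exists l : ghom B X, (forall x, l (i x) = a x) /\ (forall y, p (l y) = b y).

Definition Gr_cof A B (i : ghom A B) : Prop :=
  forall X Y (p : ghom X Y), Gr_fib p -> Gr_weq p -> Gr_llp i p.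

Definition Gr_empty : graph.
Proof.
refine (@Graph Empty_set (fun _ _ => False) _ _); by case.
Defined.

Definition Gr_from_empty (G : graph) : ghom Gr_empty G.
Proof. by refine (@GHom Gr_empty G (fun x => match x with end) _). Defined.

Definition Gr_cofibrant (G : graph) : Prop := Gr_cof (Gr_from_empty G).

Record lgraph := LGraph {
  lV :> Type;
  ladj : lV -> lV -> Prop;
  ladj_sym : forall x y, ladj x y -> ladj y x }.

Record lhom (G H : lgraph) := LHom {
  lmap :> G -> H;
  lmap_adj : forall x y, ladj x y -> ladj (lmap x) (lmap y) }.

(* i_l : all vertices looped *)
Definition il (G : graph) : lgraph := @LGraph G (@gadj G) (@gadj_sym G).

Definition il_map G H (f : ghom G H) : lhom (il G) (il H) :=
  @LHom (il G) (il H) f (@gmap_adj G H f).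

Definition circ (Y : lgraph) : graph.
Proof.
refine (@Graph {v : Y | ladj v v} (fun x y => ladj (proj1_sig x) (proj1_sig y))
          _ _).
- by move=> x y; apply: ladj_sym.
- by move=> [x hx].
Defined.

Definition circ_map Y Y' (g : lhom Y Y') : ghom (circ Y) (circ Y').
Proof.
refine (@GHom (circ Y) (circ Y')
  (fun x => exist (fun v => ladj v v) (g (proj1_sig x)) (lmap_adj g (proj2_sig x))) _).
by move=> x y /= h; apply: lmap_adj.
Defined.

Definition il_adjunct (X : graph) (Y : lgraph) (g : lhom (il X) Y) :
  ghom X (circ Y).
Proof.
refine (@GHom X (circ Y)
  (fun x => exist (fun v => ladj v v) (g x) (lmap_adj g (gadj_refl x))) _).
by move=> x y /= h; apply: lmap_adj.
Defined.

Definition Grl_weq Y Y' (g : lhom Y Y') : Prop := Gr_weq (circ_map g).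
Definition Grl_fib Y Y' (g : lhom Y Y') : Prop := Gr_fib (circ_map g).

Definition Grl_llp A B X Y (i : lhom A B) (p : lhom X Y) : Prop :=
  forall (a : lhom A X) (b : lhom B Y),
    (forall x, p (a x) = b (i x)) ->
    exists l : lhom B X, (forall x, l (i x) = a x) /\ (forall y, p (l y) = b y).

Definition Grl_cof A B (i : lhom A B) : Prop :=
  forall X Y (p : lhom X Y), Grl_fib p -> Grl_weq p -> Grl_llp i p.

Definition Grl_pt : lgraph.
Proof. by refine (@LGraph unit (fun _ _ => True) _). Defined.

Definition Grl_to_pt (Y : lgraph) : lhom Y Grl_pt.
Proof. by refine (@LHom Y Grl_pt (fun _ => tt) _). Defined.

Definition Grl_fibrant (Y : lgraph) : Prop := Grl_fib (Grl_to_pt Y).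

Definition il_circ_Quillen_equivalence : Prop :=
  (* Quillen adjunction: the left adjoint preserves cofibrations ... *)
  (forall A B (i : ghom A B), Gr_cof i -> Grl_cof (il_map i)) /\
  (* ... and trivial cofibrations *)
  (forall A B (i : ghom A B), Gr_cof i -> Gr_weq i ->
      Grl_cof (il_map i) /\ Grl_weq (il_map i)) /\
  (* equivalence: for cofibrant X and fibrant Y, g : i_l X -> Y is a weak
     equivalence iff its adjunct X -> Y^o is *)
  (forall (X : graph) (Y : lgraph), Gr_cofibrant X -> Grl_fibrant Y ->
      forall g : lhom (il X) Y, Grl_weq g <-> Gr_weq (il_adjunct g)).

From Stdlib Require Import FunctionalExtensionality ProofIrrelevance Relations.
From mathcomp Require Import all_boot.

Set Implicit Arguments.
Unset Strict Implicit.
Unset Printing Implicit Defensive.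

(* The left adjoint i_l is fully faithful: the unit X -> (i_l X)^o is an
   isomorphism of reflexive graphs.  Fibrations and weak equivalences of Gr_l
   are created by (-)^o, so a lifting problem of i_l A -> i_l B against p in
   Gr_l transposes to one of A -> B against p^o in Gr; hence i_l preserves
   cofibrations.  For weak equivalences, (i_l f)^o is f conjugated by the
   unit, and the adjunct of g : i_l X -> Y is g^o precomposed with the unit;
   weak equivalences being invariant under composition with isomorphisms,
   both remaining conditions follow. *)

Definition cyl_map X Y (h : shom X Y) : shom (cyl X) (cyl Y).
Proof.
refine (@SHom (cyl X) (cyl Y) (fun n x => (h n x.1, x.2)) _).
by move=> m n t [x p] /=; rewrite shnat.
Defined.

Lemma shcompA X Y Z W (c : shom Z W) (g : shom Y Z) (f : shom X Y) :
  shcomp (shcomp c g) f = shcomp c (shcomp g f).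
Proof. exact: shom_eq. Qed.

Lemma homotopic_precomp X Y K (h : shom X Y) (a a' : shom Y K) :
  homotopic a a' -> homotopic (shcomp a h) (shcomp a' h).
Proof.
case=> H [H0 H1]; exists (shcomp H (cyl_map h)); split => n x /=.
- exact: H0.
- exact: H1.
Qed.

Lemma hrel_precomp X Y K (h : shom X Y) (a a' : shom Y K) :
  hrel a a' -> hrel (shcomp a h) (shcomp a' h).
Proof.
elim=> [b b' hb|b|b b' _ IH|b b' b'' _ IH1 _ IH2].
- by apply: rst_step; apply: homotopic_precomp.
- exact: rst_refl.
- exact: rst_sym.
- exact: rst_trans IH1 IH2.
Qed.

Lemma weq_comp X Y Z (f : shom X Y) (g : shom Y Z) :
  weq f -> weq g -> weq (shcomp g f).
Proof.
move=> hf hg K hK; have [sf jf] := hf K hK; have [sg jg] := hg K hK; split.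
- move=> a; have [b hb] := sf a; have [c hc] := sg b; exists c.
  by apply: rst_trans hb _; rewrite -shcompA; apply: hrel_precomp.
- by move=> c c' h; apply/jg/jf; rewrite !shcompA.
Qed.

Lemma weq_iso X Y (f : shom X Y) (g : shom Y X) :
  (forall n x, g n (f n x) = x) -> (forall n y, f n (g n y) = y) -> weq f.
Proof.
move=> gf fg K hK; split.
- move=> a; exists (shcomp a g).
  have -> : shcomp (shcomp a g) f = a by apply: shom_eq => n x /=; rewrite gf.
  exact: rst_refl.
- move=> b b' /(hrel_precomp g).
  have gfK (b0 : shom Y K) : shcomp (shcomp b0 f) g = b0
    by apply: shom_eq => n y /=; rewrite fg.
  by rewrite !gfK.
Qed.

Lemma ghom_eq G H (f g : ghom G H) : (forall x, f x = g x) -> f = g.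
Proof.
case: f g => f fp [g gp] /= E.
have {}E : f = g by apply: functional_extensionality.
subst g; f_equal; apply: proof_irrelevance.
Qed.

Definition gid G : ghom G G := @GHom G G id (fun x y h => h).

Definition gcomp G H I (g : ghom H I) (f : ghom G H) : ghom G I :=
  @GHom G I (fun x => g (f x)) (fun x y h => gmap_adj g (gmap_adj f h)).

Definition ghom_iso G H (f : ghom G H) : Prop :=
  exists g : ghom H G, (forall x, g (f x) = x) /\ (forall y, f (g y) = y).

Lemma Gr_weq_comp G H I (f : ghom G H) (g : ghom H I) :
  Gr_weq f -> Gr_weq g -> Gr_weq (gcomp g f).
Proof.
rewrite /Gr_weq => hf hg.
have -> : Sing_map (Cl_map (gcomp g f)) =
          shcomp (Sing_map (Cl_map g)) (Sing_map (Cl_map f))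
  by apply: shom_eq => n x; apply: chom_eq.
exact: weq_comp.
Qed.

Lemma Gr_weq_iso G H (f : ghom G H) : ghom_iso f -> Gr_weq f.
Proof.
case=> g [gf fg]; apply: (@weq_iso _ _ _ (Sing_map (Cl_map g))) => n x;
  apply: chom_eq => v /=; [exact: gf | exact: fg].
Qed.

Lemma Gr_weq_iso_square G H G' H' (f : ghom G H) (f' : ghom G' H')
    (u : ghom G G') (v : ghom H H') :
  ghom_iso u -> ghom_iso v -> (forall x, f' (u x) = v (f x)) ->
  Gr_weq f <-> Gr_weq f'.
Proof.
move=> [u' [u'u uu']] [v' [v'v vv']] sq; split => hf.
- have -> : f' = gcomp v (gcomp f u').
    by apply: ghom_eq => y /=; rewrite -sq uu'.
  apply: Gr_weq_comp; last by apply: Gr_weq_iso; exists v'.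
  by apply: Gr_weq_comp hf; apply: Gr_weq_iso; exists u.
- have -> : f = gcomp v' (gcomp f' u).
    by apply: ghom_eq => x /=; rewrite sq v'v.
  apply: Gr_weq_comp; last by apply: Gr_weq_iso; exists v.
  by apply: Gr_weq_comp hf; apply: Gr_weq_iso; exists u'.
Qed.

Definition il_unit (X : graph) : ghom X (circ (il X)) :=
  @GHom X (circ (il X)) (fun x => exist (fun v => gadj v v) x (gadj_refl x))
    (fun x y h => h).

Lemma il_unit_iso X : ghom_iso (il_unit X).
Proof.
exists (@GHom (circ (il X)) X (@proj1_sig _ _) (fun x y h => h)).
by split => [//|y]; apply: sigP_eq.
Qed.

Lemma Grl_llp_il A B X Y (i : ghom A B) (p : lhom X Y) :
  Gr_llp i (circ_map p) -> Grl_llp (il_map i) p.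
Proof.
move=> hllp a b hab.
have [l [li pl]] : exists l : ghom B (circ X),
    (forall x, l (i x) = il_adjunct a x) /\
    (forall y, circ_map p (l y) = il_adjunct b y).
  by apply: hllp => x; apply: sigP_eq; exact: hab.
exists (@LHom (il B) X (fun y => proj1_sig (l y)) (fun x y h => gmap_adj l h)).
split => [x|y] /=; first by rewrite li.
exact: (f_equal (@proj1_sig _ _) (pl y)).
Qed.

Lemma Grl_cof_il A B (i : ghom A B) : Gr_cof i -> Grl_cof (il_map i).
Proof. by move=> hi X Y p hf hw; apply/Grl_llp_il/hi. Qed.

Lemma Grl_weq_il A B (i : ghom A B) : Gr_weq i <-> Grl_weq (il_map i).
Proof.
apply: Gr_weq_iso_square (il_unit_iso A) (il_unit_iso B) _ => x.
exact: sigP_eq.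
Qed.

Lemma Gr_weq_il_adjunct (X : graph) (Y : lgraph) (g : lhom (il X) Y) :
  Grl_weq g <-> Gr_weq (il_adjunct g).
Proof.
have gid_iso : ghom_iso (gid (circ Y)) by exists (gid _).
apply: iff_sym; apply: (Gr_weq_iso_square (il_unit_iso X) gid_iso) => x.
exact: sigP_eq.
Qed.

Theorem theorem5p15 : il_circ_Quillen_equivalence.
Proof.
split; first exact: Grl_cof_il.
split; last by move=> X Y _ _ g; apply: Gr_weq_il_adjunct.
by move=> A B i hi /Grl_weq_il hw; split => //; apply: Grl_cof_il.
Qed.
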